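(* Let $n\ge q\ge 2$ be integers and put $S_1=\sqrt{q^2+4(q-1)(n-2)}$. Let $d$ be an integer and define $j$ by $d=n-1-\frac{n-2+j}{q}$ (so $j=q(n-1-d)-n+2$), and assume $j\in\left[0,\frac{S_1-q}{2}\right)$. Put $s=1-\frac{2d}{n}$, $d_0=n-\frac{j(n-1)}{q(j+q-1)}$, let $e$ be the unique rational number in $(0,1]$ such that $d_0+e$ is an integer, and set $$a=\frac{(n-1)(q-1)(q+j)}{q+j-1}+eq,\quad D=(j+q-1)[2n(q-1)-q]+q,\quad E=-n(n-1)(q-1)^2(j+q).$$ Then $$A_q(n,s)\le \frac{a(a+q)dq}{a^2(2-q-j)+Da+E}.$$
   Context: $H(n,q)$ is the set of words of length $n$ over the alphabet $\{0,1,\dots,q-1\}$ with Hamming distance $d(x,y)$; the inner product is $\langle x,y\rangle=1-\frac{2d(x,y)}{n}$. For $s\in[-1,1)$, $A_q(n,s)$ is the maximum cardinality of a code $C\subset H(n,q)$ with $\langle x,y\rangle\le s$ for all distinct $x,y\in C$ (equivalently, minimum distance at least $n(1-s)/2$). *)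

From mathcomp Require Import all_boot all_order all_algebra.
From mathcomp Require Import reals.
Set Implicit Arguments. Unset Strict Implicit. Unset Printing Implicit Defensive.
Import Order.TTheory GRing.Theory Num.Theory.
Local Open Scope ring_scope.

Definition word (n q : nat) := {ffun 'I_n -> 'I_q}.

Definition hamming (n q : nat) (x y : word n q) : nat :=
  #|[set i : 'I_n | x i != y i]|.

Definition inner (R : realFieldType) (n q : nat) (x y : word n q) : R :=
  1 - 2 * (hamming x y)%:R / n%:R.

Definition is_code (R : realFieldType) (n q : nat) (s : R) (C : {set word n q}) : bool :=
  [forall x in C, forall y in C, (x != y) ==> (inner R x y <= s)].

Definition A_q (R : realFieldType) (q n : nat) (s : R) : nat :=
  \max_(C : {set word n q} | is_code s C) #|C|.

From mathcomp Require Import all_boot all_order all_algebra.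
From mathcomp Require Import reals.
From mathcomp Require Import ring lra.
Import Order.TTheory GRing.Theory Num.Theory.
Local Open Scope ring_scope.
Set Implicit Arguments. Unset Strict Implicit. Unset Printing Implicit Defensive.

(* Delsarte's linear programming method with a cubic.  For words x, y let
   zeta_t(x, y) = q [x_t = y_t] - 1, so L(x, y) = sum_t zeta_t(x, y)
   = n (q - 1) - q d(x, y).  Each zeta_t is a Gram kernel, and so is any
   product of zeta_t over distinct coordinates; such kernels have nonnegative
   sums over C x C.  Reducing with zeta_t^2 = (q - 2) zeta_t + (q - 1), a monic
   cubic f(L) becomes such products over triples, pairs and single coordinates
   plus a constant c0; if their coefficients are nonnegative and f(L(x, y)) <= 0
   for distinct codewords, then c0 |C|^2 <= sum_(x, y in C) f(L(x, y))
   <= |C| f(n (q - 1)).  For the theorem, f has its roots at the distances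
   d, m - 1 and m, where m = d0 + e is an integer, so f <= 0 at every integer
   distance >= d, and c0 is the denominator of the bound. *)

Section GramKernel.
Variables (R : realFieldType) (T : finType).

Definition gram_kernel (K : T -> T -> R) :=
  exists (I : finType) (w : I -> R) (f : I -> T -> R),
    (forall i, 0 <= w i) /\ (forall x y, K x y = \sum_i w i * (f i x * f i y)).

Lemma sum_gram_kernel_ge0 K (C : {set T}) :
  gram_kernel K -> 0 <= \sum_(x in C) \sum_(y in C) K x y.
Proof.
case=> I [w [f [w_ge0 defK]]].
have -> : \sum_(x in C) \sum_(y in C) K x y =
          \sum_i w i * (\sum_(x in C) f i x) ^+ 2.
  under eq_bigr do under eq_bigr do rewrite defK.
  under eq_bigr do rewrite exchange_big /=.
  rewrite exchange_big /=; apply: eq_bigr => i _.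
  rewrite expr2 big_distrlr /= mulr_sumr; apply: eq_bigr => x _.
  by rewrite mulr_sumr; apply: eq_bigr => y _; rewrite mulrA.
by apply: sumr_ge0 => i _; rewrite mulr_ge0 ?sqr_ge0.
Qed.

Lemma gram_kernelM K1 K2 :
  gram_kernel K1 -> gram_kernel K2 -> gram_kernel (fun x y => K1 x y * K2 x y).
Proof.
case=> I1 [w1 [f1 [w1_ge0 defK1]]] [I2 [w2 [f2 [w2_ge0 defK2]]]].
exists (I1 * I2)%type, (fun p => w1 p.1 * w2 p.2),
  (fun p x => f1 p.1 x * f2 p.2 x); split=> [p|x y]; first exact: mulr_ge0.
rewrite defK1 defK2 big_distrlr /= pair_bigA /=.
by apply: eq_bigr => p _; ring.
Qed.

Lemma sum_gram_comb_ge0 (J : finType) (c : J -> R) (K : J -> T -> T -> R)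
    (C : {set T}) : (forall i, 0 <= c i) -> (forall i, gram_kernel (K i)) ->
  0 <= \sum_(x in C) \sum_(y in C) \sum_i c i * K i x y.
Proof.
move=> c_ge0 gramK.
under eq_bigr do rewrite exchange_big /=.
rewrite exchange_big /=; apply: sumr_ge0 => i _.
under eq_bigr do rewrite -mulr_sumr.
by rewrite -mulr_sumr mulr_ge0 ?sum_gram_kernel_ge0.
Qed.

End GramKernel.

Lemma gram_kernel_comp (R : realFieldType) (T T' : finType) (g : T' -> T)
    (K : T -> T -> R) :
  gram_kernel K -> gram_kernel (fun x y => K (g x) (g y)).
Proof.
case=> I [w [f [w_ge0 defK]]].
by exists I, w, (fun i x => f i (g x)); split=> // x y; rewrite defK.
Qed.

Section DistinctIndexSums.
Variables (R : comPzRingType) (I : finType).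

Lemma sum_eq_mulr (i : I) (g : I -> R) : \sum_k (i == k)%:R * g k = g i.
Proof.
rewrite (bigD1 i) //= eqxx mul1r big1 ?addr0 // => k.
by rewrite eq_sym => /negbTE->; rewrite mul0r.
Qed.

Lemma sum_neq_mulr (i : I) (g : I -> R) :
  \sum_k (i != k)%:R * g k = \sum_k g k - g i.
Proof.
rewrite [in RHS](bigD1 i) //= (bigD1 i) //= eqxx mul0r add0r addrAC subrr add0r.
by apply: eq_bigr => k; rewrite eq_sym => ->; rewrite mul1r.
Qed.

Lemma sum_neq2_mulr (i1 i2 : I) (g : I -> R) : i1 != i2 ->
  \sum_k ((i1 != k)%:R * (i2 != k)%:R) * g k = \sum_k g k - g i1 - g i2.
Proof.
move=> i12; under eq_bigr do rewrite -mulrA.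
rewrite (sum_neq_mulr i1 (fun k => (i2 != k)%:R * g k)) sum_neq_mulr.
by rewrite [i2 == i1]eq_sym i12 mul1r addrAC.
Qed.

Lemma sum_pairs_neq (f g : I -> R) :
  \sum_i1 \sum_i2 (i1 != i2)%:R * (f i1 * g i2) =
  (\sum_i f i) * (\sum_i g i) - \sum_i f i * g i.
Proof.
rewrite mulr_suml -sumrB; apply: eq_bigr => i1 _.
under eq_bigr do rewrite mulrCA.
by rewrite -mulr_sumr sum_neq_mulr mulrBr.
Qed.

Lemma sum_triples_neq (g : I -> R) :
  \sum_i1 \sum_i2 \sum_i3 ((i1 != i2)%:R * (i1 != i3)%:R * (i2 != i3)%:R) *
     (g i1 * g i2 * g i3) =
  (\sum_i g i) ^+ 3 - 3 * (\sum_i g i) * (\sum_i g i ^+ 2) + 2 * \sum_i g i ^+ 3.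
Proof.
set p1 := \sum_i g i.
have -> : \sum_i1 \sum_i2 \sum_i3
    ((i1 != i2)%:R * (i1 != i3)%:R * (i2 != i3)%:R) * (g i1 * g i2 * g i3) =
    \sum_i1 \sum_i2 (i1 != i2)%:R * (g i1 * g i2 * (p1 - g i1 - g i2)).
  apply: eq_bigr => i1 _; apply: eq_bigr => i2 _.
  have [<-|i12] := eqVneq i1 i2.
    by rewrite mul0r big1 // => i3 _; rewrite !mul0r.
  rewrite -(sum_neq2_mulr g i12) !mulr_sumr.
  by apply: eq_bigr => i3 _; ring.
have split3 i1 i2 : (i1 != i2)%:R * (g i1 * g i2 * (p1 - g i1 - g i2)) =
    p1 * ((i1 != i2)%:R * (g i1 * g i2))
    - (i1 != i2)%:R * (g i1 ^+ 2 * g i2) - (i1 != i2)%:R * (g i1 * g i2 ^+ 2).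
  by ring.
under eq_bigr do under eq_bigr do rewrite split3.
under eq_bigr do rewrite !sumrB -mulr_sumr.
rewrite !sumrB -mulr_sumr !sum_pairs_neq -/p1.
have sq : \sum_i g i * g i = \sum_i g i ^+ 2 by [].
have cubeL : \sum_i g i ^+ 2 * g i = \sum_i g i ^+ 3.
  by apply: eq_bigr => i _; rewrite -exprSr.
have cubeR : \sum_i g i * g i ^+ 2 = \sum_i g i ^+ 3.
  by apply: eq_bigr => i _; rewrite -exprS.
rewrite sq cubeL cubeR.
ring.
Qed.

End DistinctIndexSums.

Section CoordinateKernel.
Variables (R : realFieldType) (n q : nat).
Local Notation word := (word n q).

Definition coord_kernel (x y : word) (t : 'I_n) : R :=
  q%:R * (x t == y t)%:R - 1.

Lemma gram_coord_kernel t :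
  (0 < q)%N -> gram_kernel (fun x y => coord_kernel x y t).
Proof.
move=> q_gt0; apply: (gram_kernel_comp (fun x : word => x t)
  (K := fun a b : 'I_q => q%:R * (a == b)%:R - 1)).
exists 'I_q, (fun _ => q%:R^-1), (fun c a => q%:R * (a == c)%:R - 1).
split=> [c|a b]; first by rewrite invr_ge0 ler0n.
have q_neq0 : q%:R != 0 :> R by rewrite pnatr_eq0 -lt0n.
rewrite -mulr_sumr.
have -> : \sum_c (q%:R * (a == c)%:R - 1) * (q%:R * (b == c)%:R - 1) =
    q%:R * (\sum_c (a == c)%:R * (q%:R * (b == c)%:R - 1))
    - \sum_c (q%:R * (b == c)%:R - 1) :> R.
  by rewrite mulr_sumr -sumrB; apply: eq_bigr => c _; ring.
rewrite sum_eq_mulr sumrB -mulr_sumr.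
under eq_bigr do rewrite -[(b == _)%:R]mulr1.
rewrite sum_eq_mulr sumr_const card_ord [b == a]eq_sym -mulr_natr.
by field.
Qed.

Lemma coord_kernel_sqr x y t :
  coord_kernel x y t ^+ 2 = (q%:R - 2) * coord_kernel x y t + (q%:R - 1).
Proof. by rewrite /coord_kernel; case: (x t == y t) => /=; ring. Qed.

Lemma sum_coord_kernel x y :
  \sum_t coord_kernel x y t = n%:R * (q%:R - 1) - q%:R * (hamming x y)%:R.
Proof.
have -> : (hamming x y)%:R = \sum_t (x t != y t)%:R :> R.
  rewrite /hamming -sum1_card natr_sum big_mkcond /=.
  by apply: eq_bigr => t _; rewrite inE; case: (x t != y t).
have -> : n%:R * (q%:R - 1) = \sum_(t < n) (q%:R - 1) :> R.
  by rewrite sumr_const card_ord mulr_natl.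
rewrite mulr_sumr -sumrB.
by apply: eq_bigr => t _; rewrite /coord_kernel; case: (x t == y t) => /=; ring.
Qed.

Lemma hamming_xx (x : word) : hamming x x = 0%N.
Proof. by apply: eq_card0 => t; rewrite !inE eqxx. Qed.

End CoordinateKernel.

Section CodeKernels.
Variables (R : realFieldType) (n q : nat).
Local Notation word := (word n q).
Local Notation zeta := (coord_kernel R).
Hypothesis q_gt0 : (0 < q)%N.

Definition dist_kernel (x y : word) := \sum_t zeta x y t.

Definition pair_kernel (x y : word) :=
  \sum_t1 \sum_t2 (t1 != t2)%:R * (zeta x y t1 * zeta x y t2).

Definition triple_kernel (x y : word) :=
  \sum_t1 \sum_t2 \sum_t3 ((t1 != t2)%:R * (t1 != t3)%:R * (t2 != t3)%:R) *
    (zeta x y t1 * zeta x y t2 * zeta x y t3).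

Lemma sum_dist_kernel_ge0 (C : {set word}) :
  0 <= \sum_(x in C) \sum_(y in C) dist_kernel x y.
Proof.
rewrite /dist_kernel.
under eq_bigr do under eq_bigr do under eq_bigr do rewrite -[zeta _ _ _]mul1r.
by apply: sum_gram_comb_ge0 => // t; apply: gram_coord_kernel.
Qed.

Lemma sum_pair_kernel_ge0 (C : {set word}) :
  0 <= \sum_(x in C) \sum_(y in C) pair_kernel x y.
Proof.
under eq_bigr do under eq_bigr do rewrite /pair_kernel pair_bigA /=.
apply: sum_gram_comb_ge0 => [p|p]; first exact: ler0n.
by apply: gram_kernelM; apply: gram_coord_kernel.
Qed.

Lemma sum_triple_kernel_ge0 (C : {set word}) :
  0 <= \sum_(x in C) \sum_(y in C) triple_kernel x y.
Proof.
under eq_bigr do under eq_bigr do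
  rewrite /triple_kernel (eq_bigr _ (fun _ _ => pair_bigA _ _)) pair_bigA /=.
apply: sum_gram_comb_ge0 => [p|p]; first by rewrite -!natrM ler0n.
by apply: gram_kernelM; first apply: gram_kernelM; apply: gram_coord_kernel.
Qed.

Local Notation N := (n%:R * (q%:R - 1) : R).

Lemma sum_coord_kernel_sqr x y :
  \sum_t zeta x y t ^+ 2 = (q%:R - 2) * dist_kernel x y + N.
Proof.
under eq_bigr do rewrite coord_kernel_sqr.
by rewrite big_split /= -mulr_sumr sumr_const card_ord mulr_natl.
Qed.

Lemma sum_coord_kernel_cube x y :
  \sum_t zeta x y t ^+ 3 =
  (q%:R - 2) * \sum_t zeta x y t ^+ 2 + (q%:R - 1) * dist_kernel x y.
Proof.
rewrite !mulr_sumr -big_split /=; apply: eq_bigr => t _.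
by rewrite exprS [in LHS]coord_kernel_sqr; ring.
Qed.

Lemma pair_kernelE x y :
  pair_kernel x y = dist_kernel x y ^+ 2 - ((q%:R - 2) * dist_kernel x y + N).
Proof. by rewrite /pair_kernel sum_pairs_neq -sum_coord_kernel_sqr. Qed.

Lemma triple_kernelE x y : let L := dist_kernel x y in
  triple_kernel x y = L ^+ 3 - 3 * L * ((q%:R - 2) * L + N)
    + 2 * ((q%:R - 2) * ((q%:R - 2) * L + N) + (q%:R - 1) * L).
Proof.
by rewrite /triple_kernel sum_triples_neq sum_coord_kernel_cube
  sum_coord_kernel_sqr.
Qed.

End CodeKernels.

Lemma sum_le_diag (R : numDomainType) (T : finType) (F : T -> T -> R)
    (C : {set T}) :
  {in C &, forall x y, x != y -> F x y <= 0} ->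
  \sum_(x in C) \sum_(y in C) F x y <= \sum_(x in C) F x x.
Proof.
move=> offdiag_le0; apply: ler_sum => x xC; rewrite (bigD1 x) //= gerDl.
by apply: sumr_le0 => y /andP[yC yx]; apply: offdiag_le0; rewrite // eq_sym.
Qed.

Section CubicCodeBound.
Variables (R : realFieldType) (n q : nat) (b2 b1 b0 : R).
Hypothesis q_gt0 : (0 < q)%N.
Local Notation word := (word n q).
Local Notation N := (n%:R * (q%:R - 1) : R).

Definition cubic (L : R) := L ^+ 3 + b2 * L ^+ 2 + b1 * L + b0.

(* Obtained by reducing powers of zeta with zeta^2 = (q - 2) zeta + (q - 1). *)
Definition cubic_coef2 := 3 * (q%:R - 2) + b2.
Definition cubic_coef1 :=
  (q%:R - 2 + b2) * (q%:R - 2) + 3 * N - 2 * (q%:R - 1) + b1.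
Definition cubic_coef0 := (q%:R - 2 + b2) * N + b0.

Lemma cubic_dist_kernelE (x y : word) :
  cubic (dist_kernel R x y) =
  triple_kernel R x y + cubic_coef2 * pair_kernel R x y
    + cubic_coef1 * dist_kernel R x y + cubic_coef0.
Proof.
rewrite triple_kernelE pair_kernelE /cubic /cubic_coef2 /cubic_coef1 /cubic_coef0.
by ring.
Qed.

Lemma dist_kernel_xx (x : word) : dist_kernel R x x = N.
Proof. by rewrite /dist_kernel sum_coord_kernel hamming_xx mulr0 subr0. Qed.

Lemma cubic_code_bound (C : {set word}) :
  0 <= cubic_coef2 -> 0 <= cubic_coef1 ->
  {in C &, forall x y, x != y -> cubic (dist_kernel R x y) <= 0} ->
  cubic_coef0 * #|C|%:R ^+ 2 <= #|C|%:R * cubic N.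
Proof.
move=> c2_ge0 c1_ge0 offdiag_le0.
have -> : #|C|%:R * cubic N = \sum_(x in C) cubic (dist_kernel R x x).
  by under eq_bigr do rewrite dist_kernel_xx; rewrite sumr_const mulr_natl.
apply: le_trans (sum_le_diag offdiag_le0).
under eq_bigr do under eq_bigr do rewrite cubic_dist_kernelE.
under eq_bigr do rewrite big_split sumr_const /=.
rewrite big_split sumr_const -mulrnA expr2 -natrM mulr_natr /=.
under eq_bigr do rewrite !big_split -!mulr_sumr /=.
rewrite !big_split -!mulr_sumr /=.
have := sum_triple_kernel_ge0 R q_gt0 C.
have := mulr_ge0 c2_ge0 (sum_pair_kernel_ge0 R q_gt0 C).
have := mulr_ge0 c1_ge0 (sum_dist_kernel_ge0 R q_gt0 C).
lra.
Qed.

End CubicCodeBound.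

Lemma sqr_lt_of_lt_sqrt (R : rcfType) (x y : R) :
  0 <= x -> x < Num.sqrt y -> x ^+ 2 < y.
Proof.
move=> x_ge0 x_lt; have y_gt0 : 0 < y by rewrite -sqrtr_gt0 (le_lt_trans x_ge0).
by rewrite -(sqr_sqrtr (ltW y_gt0)) ltrXn2r.
Qed.

Lemma lt_quadratic_root (R : rcfType) (b c x : R) : 0 <= b -> 0 <= x ->
  x < (Num.sqrt (b ^+ 2 + 4 * c) - b) / 2 -> x * (x + b) < c.
Proof.
move=> b_ge0 x_ge0 x_lt.
have lt_sqrt : 2 * x + b < Num.sqrt (b ^+ 2 + 4 * c) by lra.
have lhs_ge0 : 0 <= 2 * x + b by lra.
by have := sqr_lt_of_lt_sqrt lhs_ge0 lt_sqrt; nra.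
Qed.

Lemma le_hamming_of_inner (R : realFieldType) (n q : nat) (x y : word n q)
    (d : R) :
  (0 < n)%N -> inner R x y <= 1 - 2 * d / n%:R -> d <= (hamming x y)%:R.
Proof.
move=> n_gt0; rewrite /inner lerD2l lerN2 ler_pM2r ?invr_gt0 ?ltr0n //.
by rewrite ler_pM2l.
Qed.

Lemma A_q_le (R : realFieldType) (q n : nat) (s b : R) : (0 < q)%N ->
  (forall C : {set word n q}, is_code s C -> (0 < #|C|)%N -> #|C|%:R <= b) ->
  (A_q q n s)%:R <= b.
Proof.
move=> q_gt0 bound.
have code1 (w : word n q) : is_code s [set w].
  apply/forall_inP => x /set1P ->; apply/forall_inP => y /set1P ->.
  by rewrite eqxx.
pose w0 : word n q := [ffun=> Ordinal q_gt0].
have codes_gt0 : (0 < #|[pred C : {set word n q} | is_code s C]|)%N.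
  by apply/card_gt0P; exists [set w0]; rewrite inE code1.
have [C codeC AqE] := eq_bigmax_cond (fun C : {set word n q} => #|C|) codes_gt0.
have Aq_ge1 : (1 <= A_q q n s)%N.
  by rewrite -(cards1 w0); apply: leq_bigmax_cond (code1 w0).
by rewrite /A_q AqE in Aq_ge1 *; apply: bound.
Qed.

Section Theorem2Cubic.
Variables (R : realFieldType) (n q : nat) (j e : R).
Local Notation nR := (n%:R : R).
Local Notation qR := (q%:R : R).
Local Notation N := (nR * (qR - 1)).

Definition bound_a := (nR - 1) * (qR - 1) * (qR + j) / (qR + j - 1) + e * qR.
Local Notation a := bound_a.

Definition bound_den (x : R) :=
  x ^+ 2 * (2 - qR - j) + ((j + qR - 1) * (2 * nR * (qR - 1) - qR) + qR) * x
  + - (nR * (nR - 1) * (qR - 1) ^+ 2 * (j + qR)).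

(* The cubic vanishes at [L = N - q h] for [h = d, m, m - 1], where
   [q d = q (n - 1) - n + 2 - j] and [a = q (m - 1)]. *)
Definition root_dist := N - (qR * (nR - 1) - nR + 2 - j).
Definition root_m := N - a - qR.

Definition bound_b2 := - (root_dist + 2 * root_m + qR).
Definition bound_b1 := root_dist * (2 * root_m + qR) + root_m * (root_m + qR).
Definition bound_b0 := - (root_dist * root_m * (root_m + qR)).

Lemma bound_cubicE L : cubic bound_b2 bound_b1 bound_b0 L =
  (L - root_dist) * (L - root_m) * (L - root_m - qR).
Proof. by rewrite /cubic /bound_b2 /bound_b1 /bound_b0; ring. Qed.

Lemma bound_coef0E : cubic_coef0 n q bound_b2 bound_b0 = bound_den a.
Proof.
by rewrite /cubic_coef0 /bound_b2 /bound_b0 /root_dist /root_m /bound_den; ring.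
Qed.

Lemma bound_coef2_ge0 :
  2 <= qR -> 0 <= j -> j * (j + qR) < (qR - 1) * (nR - 2) -> 0 < e ->
  0 <= cubic_coef2 q bound_b2.
Proof.
move=> qR_ge2 j_ge0 j_small e_gt0.
have M_neq0 : qR + j - 1 != 0 by rewrite gt_eqF //; lra.
have -> : cubic_coef2 q bound_b2 =
    2 * (((qR - 1) * (nR - 2) - j * (j + qR)) / (qR + j - 1)) + 2 * e * qR
    + qR + j.
  by rewrite /cubic_coef2 /bound_b2 /root_dist /root_m /bound_a; field.
have : 0 < ((qR - 1) * (nR - 2) - j * (j + qR)) / (qR + j - 1).
  by rewrite divr_gt0 ?subr_gt0 //; lra.
have : 0 < e * qR by rewrite mulr_gt0 //; lra.
lra.
Qed.

Lemma bound_coef1_ge0 :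
  2 <= qR -> qR <= nR -> 0 <= j -> j * (j + qR) < (qR - 1) * (nR - 2) ->
  0 <= cubic_coef1 n q bound_b2 bound_b1.
Proof.
move=> qR_ge2 qR_le_nR j_ge0 j_small.
have -> : cubic_coef1 n q bound_b2 bound_b1 =
    ((2 * a - 2 * nR * (qR - 1) + qR - 2 * j) ^+ 2
     + (4 * ((qR - 1) * (3 * nR - 2 * j - 2)) - (qR - 2 * j) ^+ 2)) / 4.
  by rewrite /cubic_coef1 /bound_b2 /bound_b1 /root_dist /root_m; field.
have : 0 < 4 * ((qR - 1) * (3 * nR - 2 * j - 2)) - (qR - 2 * j) ^+ 2 by nra.
have := sqr_ge0 (2 * a - 2 * nR * (qR - 1) + qR - 2 * j).
lra.
Qed.

Lemma bound_den_gt0 :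
  2 <= qR -> 0 <= j -> j * (j + qR) < (qR - 1) * (nR - 2) -> 0 < e -> e <= 1 ->
  0 < bound_den a.
Proof.
move=> qR_ge2 j_ge0 j_small e_gt0 e_le1.
pose M := qR + j - 1; pose W := nR * (qR - 1) - j * (qR + j - 2).
have M_gt0 : 0 < M by rewrite /M; lra.
have -> : bound_den a = (W * ((qR - 1) * (nR - 1) * (qR + j) + 2 * e * qR * M)
    + e * qR * (qR - e * qR) * M ^+ 2 * (M - 1)) / M ^+ 2.
  by rewrite /bound_den /bound_a /W /M; field; rewrite gt_eqF.
have W_gt0 : 0 < W by rewrite /W; nra.
have nR_gt1 : 1 < nR by nra.
apply: divr_gt0; last by rewrite exprn_gt0.
have : 0 < (qR - 1) * (nR - 1) * (qR + j) by rewrite !mulr_gt0 //; lra.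
have : 0 <= e * qR * M by rewrite !mulr_ge0 //; lra.
have : 0 <= e * qR * (qR - e * qR) * M ^+ 2 * (M - 1).
  by rewrite !mulr_ge0 ?sqr_ge0 //; rewrite /M; nra.
nra.
Qed.

Lemma bound_cubic_N (d : R) : qR * d = qR * (nR - 1) - nR + 2 - j ->
  cubic bound_b2 bound_b1 bound_b0 N = a * (a + qR) * d * qR.
Proof. by move=> qd_eq; rewrite bound_cubicE /root_dist /root_m -qd_eq; ring. Qed.

Lemma bound_cubic_le0 (d m h : R) :
  qR * d = qR * (nR - 1) - nR + 2 - j -> a = qR * (m - 1) ->
  d <= h -> 0 <= (m - h) * (m - h - 1) ->
  cubic bound_b2 bound_b1 bound_b0 (N - qR * h) <= 0.
Proof.
move=> qd_eq a_eq d_le_h m_h_ge0.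
have -> : cubic bound_b2 bound_b1 bound_b0 (N - qR * h) =
    qR ^+ 3 * ((d - h) * ((m - h) * (m - h - 1))).
  by rewrite bound_cubicE /root_dist /root_m -qd_eq a_eq; ring.
by rewrite mulr_ge0_le0 ?exprn_ge0 ?mulr_le0_ge0 // subr_le0.
Qed.

End Theorem2Cubic.

Lemma int_mul_pred_ge0 (R : archiNumDomainType) (x : R) :
  x \is a Num.int -> 0 <= x * (x - 1).
Proof. by move=> /intr_ler_sqr; rewrite mulrBr mulr1 -expr2 subr_ge0. Qed.

Lemma card_code_le (R : archiRealFieldType) (n q : nat) (j e d m : R)
    (C : {set word n q}) :
  (2 <= q)%N -> (q <= n)%N -> 0 <= j ->
  j * (j + q%:R) < (q%:R - 1) * (n%:R - 2) -> 0 < e -> e <= 1 ->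
  q%:R * d = q%:R * (n%:R - 1) - n%:R + 2 - j ->
  bound_a n q j e = q%:R * (m - 1) -> m \is a Num.int -> (0 < #|C|)%N ->
  {in C &, forall x y, x != y -> d <= (hamming x y)%:R} ->
  #|C|%:R * bound_den n q j (bound_a n q j e) <=
    bound_a n q j e * (bound_a n q j e + q%:R) * d * q%:R.
Proof.
move=> q_ge2 q_le_n j_ge0 j_small e_gt0 e_le1 qd_eq a_eq m_int C_gt0 dist_ge.
have qR_ge2 : 2 <= q%:R :> R by rewrite (ler_nat R 2 q).
have qR_le_nR : q%:R <= n%:R :> R by rewrite ler_nat.
have q_gt0 : (0 < q)%N by apply: leq_trans q_ge2.
have offdiag : {in C &, forall x y, x != y ->
    cubic (bound_b2 n q j e) (bound_b1 n q j e) (bound_b0 n q j e)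
      (dist_kernel R x y) <= 0}.
  move=> x y xC yC xy; rewrite /dist_kernel sum_coord_kernel.
  apply: (bound_cubic_le0 qd_eq a_eq); first exact: dist_ge.
  by apply: int_mul_pred_ge0; rewrite rpredB ?natr_int.
have := cubic_code_bound q_gt0 (bound_coef2_ge0 qR_ge2 j_ge0 j_small e_gt0)
  (bound_coef1_ge0 e qR_ge2 qR_le_nR j_ge0 j_small) offdiag.
rewrite bound_coef0E (bound_cubic_N e qd_eq).
by rewrite expr2 mulrCA ler_pM2l ?ltr0n // mulrC.
Qed.

Theorem theorem2 (R : realType) (n q : nat) (d : int) (e : R) :
  (2 <= q)%N -> (q <= n)%N ->
  let S1 : R := Num.sqrt ((q ^ 2)%:R + 4 * (q%:R - 1) * (n%:R - 2)) in
  let j : int := q%:Z * (n%:Z - 1 - d) - n%:Z + 2 in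
  (0 <= j) -> (j%:~R : R) < (S1 - q%:R) / 2 ->
  let s : R := 1 - 2 * d%:~R / n%:R in
  let jR : R := j%:~R in
  let nR : R := n%:R in
  let qR : R := q%:R in
  let d0 : R := nR - jR * (nR - 1) / (qR * (jR + qR - 1)) in
  0 < e -> e <= 1 -> (d0 + e) \is a Num.int ->
  let a : R := (nR - 1) * (qR - 1) * (qR + jR) / (qR + jR - 1) + e * qR in
  let D : R := (jR + qR - 1) * (2 * nR * (qR - 1) - qR) + qR in
  let E : R := - (nR * (nR - 1) * (qR - 1) ^+ 2 * (jR + qR)) in
  ((A_q q n s)%:R : R) <=
    a * (a + qR) * d%:~R * qR / (a ^+ 2 * (2 - qR - jR) + D * a + E).
Proof.
move=> q_ge2 q_le_n S1 j j_ge0 j_lt s jR nR qR d0 e_gt0 e_le1 m_int; cbv zeta.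
rewrite -/(bound_a n q jR e) -/(bound_den n q jR (bound_a n q jR e)).
subst d0 qR nR jR.
set m := _ + e in m_int.
have q_gt0 : (0 < q)%N by apply: leq_trans q_ge2.
have qR_ge2 : 2 <= q%:R :> R by rewrite (ler_nat R 2 q).
have jR_ge0 : 0 <= j%:~R :> R by rewrite ler0z.
have qd_eq : q%:R * d%:~R = q%:R * (n%:R - 1) - n%:R + 2 - j%:~R :> R.
  by rewrite /j; ring.
have a_eq : bound_a n q j%:~R e = q%:R * (m - 1).
  by rewrite /bound_a /m; field; apply/andP; split; apply: lt0r_neq0; lra.
rewrite /S1 natrX -mulrA in j_lt.
have j_small := lt_quadratic_root (ler0n _ q) jR_ge0 j_lt.
apply: A_q_le => // C codeC C_gt0.
rewrite ler_pdivlMr; last exact: bound_den_gt0.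
apply: card_code_le m_int C_gt0 _ => // x y xC yC xy.
apply: le_hamming_of_inner; first exact: leq_trans q_le_n.
by move/forall_inP: codeC => /(_ x xC)/forall_inP/(_ y yC); rewrite xy.
Qed.
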